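(* Let $k$ be a field and $\mathcal{R}=\mathrm{RCFM}(k)$. For every finitely presented right $\mathcal{R}$-module $\mathcal{M}$ one has $\operatorname{Ext}^1_{\mathcal{R}}(\mathcal{M},\mathcal{C}^{\oplus d})=0$ for all $d\in\mathbb{N}_0$ and $\operatorname{Ext}^1_{\mathcal{R}}(\mathcal{M},\mathcal{C}_\infty)=0$.
   Context: $\mathcal{R}=\mathrm{RCFM}(k)$ is the $k$-algebra of $\mathbb{N}_0\times\mathbb{N}_0$ row-column-finite matrices. $\mathsf{A}$: $\mathsf{a}_{i+1,i}=1$ ($i\in\mathbb{N}_0$), other entries $0$; $\mathsf{B}$: $\mathsf{b}_{\frac{n(n+1)}{2}+i,\frac{(n-1)n}{2}+i}=1$ ($n>0$, $0\le i<n$), other entries $0$. $\mathcal{C}=\mathcal{R}/(\mathsf{I}-\mathsf{A}^t)\mathcal{R}$, $\mathcal{C}_\infty=\mathcal{R}/(\mathsf{I}-\mathsf{B}^t)\mathcal{R}$. *)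

From HB Require Import structures.
From mathcomp Require Import all_boot all_order all_algebra.
From Stdlib Require Import ClassicalEpsilon.
Set Implicit Arguments. Unset Strict Implicit. Unset Printing Implicit Defensive.
Import GRing.Theory.
Local Open Scope ring_scope.

Definition mx (k : fieldType) := nat -> nat -> k.

Section RCFM.
Variable k : fieldType.

Definition row_finite (X : mx k) :=
  forall i, exists b : nat, forall j, (b <= j)%N -> X i j = 0.
Definition col_finite (X : mx k) :=
  forall j, exists b : nat, forall i, (b <= i)%N -> X i j = 0.
Definition rcfm (X : mx k) := row_finite X /\ col_finite X.

(* a bound for the support of row i (meaningful when X is row-finite) *)
Definition rbound (X : mx k) (i : nat) : nat :=
  epsilon (inhabits 0%N) (fun b => forall j, (b <= j)%N -> X i j = 0).

Definition mxmul (X Y : mx k) : mx k :=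
  fun i j => \sum_(l < rbound X i) X i l * Y l j.
Definition mxsub (X Y : mx k) : mx k := fun i j => X i j - Y i j.
Definition mxid : mx k := fun i j => if i == j then 1 else 0.
Definition mxtr (X : mx k) : mx k := fun i j => X j i.
Definition mxsum (m : nat) (F : 'I_m -> mx k) : mx k :=
  fun i j => \sum_(t < m) F t i j.
Definition mxeq (X Y : mx k) := forall i j, X i j = Y i j.

Definition matA : mx k := fun i j => if i == j.+1 then 1 else 0.
(* B : b_{n(n+1)/2 + i, (n-1)n/2 + i} = 1 for n > 0, 0 <= i < n *)
Definition matB : mx k := fun r c =>
  if has (fun n => has (fun i => (r == (n * n.+1) %/ 2 + i)%N &&
                                 (c == (n.-1 * n) %/ 2 + i)%N) (iota 0 n))
         (iota 1 r)
  then 1 else 0.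

Definition in_ideal (T X : mx k) :=
  exists Z, rcfm Z /\ mxeq X (mxmul (mxsub mxid T) Z).

(* Elements of (R/(I-T)R)^{(+)d} are represented by d-tuples of elements of R;
   v is zero in the module iff every coordinate lies in (I - T)R. *)
Definition zero_in_quot (T : mx k) (d : nat) (v : 'I_d -> mx k) :=
  forall t, in_ideal T (v t).

(* Let M = coker (R^m --P--> R^n) be the finitely presented right R-module
   presented by the n x m matrix P over R (acting on columns by left
   multiplication).  With a free resolution  ... -> P2 -> R^m -> R^n -> M -> 0
   where P2 maps onto ker P, Hom_R(R^m, N) = N^m and Ext^1(M, N) is the
   cohomology  { 1-cocycles } / { 1-coboundaries }  of Hom_R(-, N).
   [ext1_zero P T d] says Ext^1_R(M, (R/(I-T)R)^{(+)d}) = 0: every cocycle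
   (nu_j)_{j<m} in N^m (i.e. sum_j nu_j r_j = 0 whenever P r = 0) is a
   coboundary (nu_j = sum_i y_i P_ij for some (y_i) in N^n). *)
Definition ext1_zero (n m : nat) (P : 'I_n -> 'I_m -> mx k) (T : mx k) (d : nat) :=
  forall nu : 'I_m -> 'I_d -> mx k,
    (forall j t, rcfm (nu j t)) ->
    (forall r : 'I_m -> mx k,
        (forall j, rcfm (r j)) ->
        (forall i, mxeq (mxsum (fun j => mxmul (P i j) (r j))) (fun _ _ => 0)) ->
        zero_in_quot T (fun t => mxsum (fun j => mxmul (nu j t) (r j)))) ->
    exists y : 'I_n -> 'I_d -> mx k,
      (forall i t, rcfm (y i t)) /\
      forall j, zero_in_quot T
        (fun t => mxsub (nu j t) (mxsum (fun i => mxmul (y i t) (P i j)))).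

End RCFM.

(* Let [T] be the shift matrix of a map [s] with [r < s r] (for [A^t],
   [s r = r + 1]; for [B^t], [s] moves row [r] of the [n]-th block by [n]).
   Then [X] lies in [(I - T)R] iff its orbit sums [r |-> \sum_t X (s^t r)]
   are finitely supported rows, so a cocycle with values in [R/(I - T)R] is,
   row by row, a cocycle with values in all rows modulo the finitely supported
   ones.  Ext^1 into that module vanishes: if for every [N] the equations
   "[v P = nu] on the columns [>= N]" were inconsistent, the witnessing linear
   relations would assemble into a syzygy of [P] pairing with [nu] to an
   infinitely supported row; and a consistent countable linear system in
   which every equation involves finitely many unknowns is solvable by
   elimination along the unknowns.  Choosing the row solutions constant along
   [s]-orbits and truncating them to the columns [c >= r], they telescope to
   a coboundary. *)

From Pilot Require Import Defs.
From mathcomp Require Import all_boot all_order all_algebra.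
From Stdlib Require Import ClassicalEpsilon Classical FunctionalExtensionality PropExtensionality.
From mathcomp Require Import ring zify.
(* Restores [Defs.mxsub], shadowed by [matrix.mxsub]. *)
Import Defs.
Set Implicit Arguments. Unset Strict Implicit. Unset Printing Implicit Defensive.
Import GRing.Theory.
Local Open Scope ring_scope.

Section LinearSystem.
Variables (k : fieldType) (E : Type) (a : E -> nat -> k) (b : E -> k).

(* The system is [\sum_u a e u * v u = b e] for [e : E], each row of [a]
   having finite support; a finite linear combination of equations is a
   sequence of (coefficient, equation) pairs. *)
Definition comb_lhs (L : seq (k * E)) u := \sum_(p <- L) p.1 * a p.2 u.
Definition comb_rhs (L : seq (k * E)) := \sum_(p <- L) p.1 * b p.2.

Hypothesis consistent : forall L, (forall u, comb_lhs L u = 0) -> comb_rhs L = 0.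

Definition pivot_comb_at t L := (forall u, (t < u)%N -> comb_lhs L u = 0) /\ comb_lhs L t != 0.
Definition pivot_comb t := epsilon (inhabits [::]) (pivot_comb_at t).

(* Gaussian elimination along the unknowns: the value of unknown [t] is read
   off a combination whose last nonzero coefficient sits at [t]. *)
Fixpoint partial_sol t : nat -> k :=
  if t is t'.+1 then fun u =>
    if u == t' then
      (comb_rhs (pivot_comb t') - \sum_(w < t') comb_lhs (pivot_comb t') w * partial_sol t' w)
        / comb_lhs (pivot_comb t') t'
    else partial_sol t' u
  else fun _ => 0.

Lemma partial_sol_stable t u : (u < t)%N -> partial_sol t u = partial_sol u.+1 u.
Proof.
elim: t => // t IH; rewrite ltnS leq_eqVlt => /orP[/eqP->|ut] //=.
by rewrite (ltn_eqF ut) IH.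
Qed.

Lemma comb_lhs_cat L1 L2 u : comb_lhs (L1 ++ L2) u = comb_lhs L1 u + comb_lhs L2 u.
Proof. by rewrite /comb_lhs big_cat. Qed.

Lemma comb_rhs_cat L1 L2 : comb_rhs (L1 ++ L2) = comb_rhs L1 + comb_rhs L2.
Proof. by rewrite /comb_rhs big_cat. Qed.

Lemma comb_lhs_scale c L u : comb_lhs [seq (c * p.1, p.2) | p <- L] u = c * comb_lhs L u.
Proof. by rewrite /comb_lhs big_map mulr_sumr; apply: eq_bigr => p _; rewrite mulrA. Qed.

Lemma comb_rhs_scale c L : comb_rhs [seq (c * p.1, p.2) | p <- L] = c * comb_rhs L.
Proof. by rewrite /comb_rhs big_map mulr_sumr; apply: eq_bigr => p _; rewrite mulrA. Qed.

(* The coefficient of [L] at [t] is cancelled by a multiple of [pivot_comb t]. *)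
Lemma partial_sol_comb t L : (forall u, (t <= u)%N -> comb_lhs L u = 0) ->
  comb_rhs L = \sum_(u < t) comb_lhs L u * partial_sol t u.
Proof.
elim: t L => [|t IH] L HL.
  by rewrite big_ord0; apply: consistent => u; apply: HL.
rewrite big_ord_recr /= eqxx.
under eq_bigr => i _ do rewrite (ltn_eqF (ltn_ord i)).
have [Lt0|Lt_neq0] := eqVneq (comb_lhs L t) 0.
  rewrite Lt0 mul0r addr0; apply: IH => u; rewrite leq_eqVlt => /orP[/eqP<-//|].
  exact: HL.
have [piv_tail piv_t] : pivot_comb_at t (pivot_comb t).
  by apply: (epsilon_spec (inhabits [::]) (pivot_comb_at t)); exists L; split=> // u /HL.
set L0 := pivot_comb t in piv_tail piv_t *.
set lam := comb_lhs L t / comb_lhs L0 t.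
have reduced : forall u, (t <= u)%N ->
    comb_lhs (L ++ [seq (- lam * p.1, p.2) | p <- L0]) u = 0.
  move=> u; rewrite leq_eqVlt => /orP[/eqP<-|tu].
    by rewrite comb_lhs_cat comb_lhs_scale /lam mulNr divfK // subrr.
  by rewrite comb_lhs_cat comb_lhs_scale HL ?piv_tail ?mulr0 ?addr0 // ltnW.
have := IH _ reduced; rewrite comb_rhs_cat comb_rhs_scale.
rewrite (eq_bigr (fun i : 'I_t => comb_lhs L i * partial_sol t i
    + - lam * (comb_lhs L0 i * partial_sol t i))); last first.
  by move=> i _; rewrite comb_lhs_cat comb_lhs_scale mulrDl mulrA.
rewrite big_split /= -mulr_sumr => H.
by rewrite -[comb_rhs L](addrK (- lam * comb_rhs L0)) H /lam; field.
Qed.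

Lemma consistent_system_solvable : exists v : nat -> k,
  forall e B, (forall u, (B <= u)%N -> a e u = 0) -> \sum_(u < B) a e u * v u = b e.
Proof.
exists (fun u => partial_sol u.+1 u) => e B Hb.
have := @partial_sol_comb B [:: (1, e)].
rewrite /comb_rhs /comb_lhs big_seq1 mul1r => ->.
  by apply: eq_bigr => i _; rewrite big_seq1 mul1r partial_sol_stable.
by move=> u Bu; rewrite big_seq1 mul1r Hb.
Qed.

End LinearSystem.

Section Support.
Variable k : fieldType.
Implicit Types (X Y Z : mx k) (v w : nat -> k).

Definition finsupp v := exists b, forall c, (b <= c)%N -> v c = 0.

Lemma finsupp_ext v w : finsupp v -> v =1 w -> finsupp w.
Proof. by case=> b Hb E; exists b => c hc; rewrite -E Hb. Qed.

Lemma finsupp_add v w : finsupp v -> finsupp w -> finsupp (fun c => v c + w c).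
Proof.
case=> a Ha [b Hb]; exists (maxn a b) => c; rewrite geq_max => /andP[ha hb].
by rewrite Ha // Hb // addr0.
Qed.

Lemma finsupp_sub v w : finsupp v -> finsupp w -> finsupp (fun c => v c - w c).
Proof.
case=> a Ha [b Hb]; exists (maxn a b) => c; rewrite geq_max => /andP[ha hb].
by rewrite Ha // Hb // subr0.
Qed.

Lemma finsupp_sum n (F : 'I_n -> nat -> k) :
  (forall i, finsupp (F i)) -> finsupp (fun c => \sum_(i < n) F i c).
Proof.
move=> HF; have [B HB] : exists B : 'I_n -> nat, forall i c, (B i <= c)%N -> F i c = 0.
  by apply: (@choice _ _ (fun i b => forall c, (b <= c)%N -> F i c = 0)).
exists (\max_(i < n) B i) => c hc; rewrite big1 // => i _; apply: HB.
exact: leq_trans (leq_bigmax i) hc.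
Qed.

Lemma sum_ord_delta B x0 (f : nat -> k) : (x0 < B)%N ->
  \sum_(x < B) (if x == x0 :> nat then f x else 0) = f x0.
Proof. by move=> h; rewrite -big_mkcond big_ord1_eq h. Qed.

Lemma sum_ord_telescope (f : nat -> k) B : \sum_(t < B) (f t - f t.+1) = f 0%N - f B.
Proof. by elim: B => [|B IH]; rewrite ?big_ord0 ?subrr // big_ord_recr /= IH addrA subrK. Qed.

Lemma sum_ord_supp (f : nat -> k) B1 B2 : (forall l, (B1 <= l)%N -> f l = 0) ->
  (forall l, (B2 <= l)%N -> f l = 0) -> \sum_(l < B1) f l = \sum_(l < B2) f l.
Proof.
wlog le12 : B1 B2 / (B1 <= B2)%N.
  by move=> W H1 H2; case: (leqP B1 B2) => [|/ltnW] h; [|symmetry]; apply: W.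
move=> H1 _; rewrite -!(big_mkord xpredT) (@big_cat_nat _ _ _ B1 0 B2 _ _ (leq0n B1) le12) /=.
by rewrite [X in _ + X]big1_seq ?addr0 // => l; rewrite mem_index_iota => /andP[_ /andP[/H1]].
Qed.

Definition cbound X c : nat :=
  epsilon (inhabits 0%N) (fun b => forall i, (b <= i)%N -> X i c = 0).

Lemma cboundP X : col_finite X -> forall c i, (cbound X c <= i)%N -> X i c = 0.
Proof. by move=> CX c; apply: (epsilon_spec (inhabits 0%N) _ (CX c)). Qed.

Lemma rboundP X : row_finite X -> forall i j, (rbound X i <= j)%N -> X i j = 0.
Proof. by move=> RX i; apply: (epsilon_spec (inhabits 0%N) _ (RX i)). Qed.

Lemma mxmulEcol X Y i c B : row_finite X -> (forall l, (B <= l)%N -> Y l c = 0) ->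
  mxmul X Y i c = \sum_(l < B) X i l * Y l c.
Proof.
move=> RX HB; apply: (sum_ord_supp (f := fun l => X i l * Y l c)) => l hl.
  by rewrite (rboundP RX) // mul0r.
by rewrite HB // mulr0.
Qed.

Lemma mxmulErow X Y i c B : row_finite X -> (forall l, (B <= l)%N -> X i l = 0) ->
  mxmul X Y i c = \sum_(l < B) X i l * Y l c.
Proof.
move=> RX HB; apply: (sum_ord_supp (f := fun l => X i l * Y l c)) => l hl.
  by rewrite (rboundP RX) // mul0r.
by rewrite HB // mul0r.
Qed.

(* Only meaningful for a column-finite [Y]. *)
Definition vecmul w Y c := \sum_(l < cbound Y c) w l * Y l c.

Lemma vecmulE w Y c B : (forall l, (B <= l)%N -> Y l c = 0) ->
  vecmul w Y c = \sum_(l < B) w l * Y l c.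
Proof.
move=> HB; have CYc : exists b, forall i, (b <= i)%N -> Y i c = 0 by exists B.
apply: (sum_ord_supp (f := fun l => w l * Y l c)) => l hl.
  by rewrite (epsilon_spec (inhabits 0%N) _ CYc) // mulr0.
by rewrite HB // mulr0.
Qed.

Lemma mxmul_vecmul X Y i c : row_finite X -> col_finite Y ->
  mxmul X Y i c = vecmul (X i) Y c.
Proof. by move=> RX CY; rewrite (mxmulEcol _ RX (cboundP CY (c:=c))). Qed.

Lemma finsupp_vecmulB w w' Y r : row_finite Y -> (forall l, (r <= l)%N -> w l = w' l) ->
  finsupp (fun c => vecmul w Y c - vecmul w' Y c).
Proof.
move=> RY E; exists (\max_(l < r) rbound Y l) => c hc.
rewrite /vecmul -sumrB big1 // => l _; rewrite -mulrBl.
case: (ltnP l r) => hl; last by rewrite E // subrr mul0r.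
by rewrite (rboundP RY) ?mulr0 // (leq_trans _ hc) // (leq_bigmax (Ordinal hl)).
Qed.

Lemma col_finite_sub X Y : col_finite X -> col_finite Y -> col_finite (mxsub X Y).
Proof.
move=> CX CY j; case: (CX j) => a Ha; case: (CY j) => b Hb; exists (maxn a b) => i.
by rewrite geq_max => /andP[ha hb]; rewrite /mxsub Ha // Hb // subr0.
Qed.

Lemma col_finite_sum m (F : 'I_m -> mx k) :
  (forall t, col_finite (F t)) -> col_finite (mxsum F).
Proof.
move=> CF j; exists (\max_(t < m) cbound (F t) j) => i hi.
rewrite /mxsum big1 // => t _; apply: (cboundP (CF t)).
exact: leq_trans (leq_bigmax t) hi.
Qed.

Lemma col_finite_mul X Y : col_finite X -> col_finite Y -> col_finite (mxmul X Y).
Proof.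
move=> CX CY j; exists (\max_(l < cbound Y j) cbound X l) => i hi.
rewrite /mxmul big1 // => l _.
case: (leqP (cbound Y j) l) => hl; first by rewrite (cboundP CY) // mulr0.
by rewrite (cboundP CX) ?mul0r // (leq_trans _ hi) // (leq_bigmax (Ordinal hl)).
Qed.

End Support.

Section OrbitSum.
Variables (k : fieldType) (s : nat -> nat).
Hypothesis s_gt : forall r, (r < s r)%N.
Implicit Types (X Y Z : mx k).

Lemma iter_s_ge t r : (t + r <= iter t s r)%N.
Proof. by elim: t => //= t IH; rewrite addSn (leq_trans _ (s_gt _)). Qed.

Definition orbit_sum X r c := \sum_(t < cbound X c) X (iter t s r) c.

Lemma orbit_sumE X r c B : (forall i, (B <= i)%N -> X i c = 0) ->
  orbit_sum X r c = \sum_(t < B) X (iter t s r) c.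
Proof.
move=> HB; have CXc : exists b, forall i, (b <= i)%N -> X i c = 0 by exists B.
have iter_ge b t : (b <= t)%N -> (b <= iter t s r)%N.
  by move=> bt; rewrite (leq_trans bt) // (leq_trans (leq_addr r t)) ?iter_s_ge.
apply: (sum_ord_supp (f := fun t => X (iter t s r) c)) => t /iter_ge; last exact: HB.
exact: (epsilon_spec (inhabits 0%N) _ CXc).
Qed.

Lemma orbit_sum_step X r c : col_finite X -> orbit_sum X r c = X r c + orbit_sum X (s r) c.
Proof.
move=> CX; case: (CX c) => b Hb.
rewrite (@orbit_sumE _ _ _ b.+1) => [|i /ltnW]; last exact: Hb.
rewrite (orbit_sumE _ Hb) big_ord_recl; congr (_ + _).
by apply: eq_bigr => i _; rewrite -iterSr.
Qed.

Lemma orbit_sumB X Y r c : col_finite X -> col_finite Y ->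
  orbit_sum (mxsub X Y) r c = orbit_sum X r c - orbit_sum Y r c.
Proof.
move=> CX CY; case: (CX c) => a Ha; case: (CY c) => b Hb.
have [HXa HYb] : (forall i, (maxn a b <= i)%N -> X i c = 0) /\
                 (forall i, (maxn a b <= i)%N -> Y i c = 0).
  by split=> i; rewrite geq_max => /andP[ha hb]; [apply: Ha | apply: Hb].
rewrite (orbit_sumE _ HXa) (orbit_sumE _ HYb) (@orbit_sumE _ _ _ (maxn a b)) ?sumrB //.
by move=> i hi; rewrite /mxsub HXa // HYb // subr0.
Qed.

Lemma orbit_sum_sum m (F : 'I_m -> mx k) r c : (forall t, col_finite (F t)) ->
  orbit_sum (mxsum F) r c = \sum_(t < m) orbit_sum (F t) r c.
Proof.
move=> CF; set B := \max_(t < m) cbound (F t) c.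
have HB t i : (B <= i)%N -> F t i c = 0.
  by move=> hi; apply: (cboundP (CF t)); exact: leq_trans (leq_bigmax t) hi.
rewrite (@orbit_sumE _ _ _ B); last by move=> i hi; rewrite /mxsum big1 // => t _; apply: HB.
by rewrite exchange_big; apply: eq_bigr => t _; rewrite (orbit_sumE _ (HB t)).
Qed.

Lemma orbit_sum_mul X Y r c : rcfm X -> col_finite Y ->
  orbit_sum (mxmul X Y) r c = vecmul (orbit_sum X r) Y c.
Proof.
move=> [RX CX] CY; set L := cbound Y c.
have HL l : (L <= l)%N -> Y l c = 0 by apply: cboundP.
set B := \max_(l < L) cbound X l.
have HB l i : (l < L)%N -> (B <= i)%N -> X i l = 0.
  by move=> hl hi; apply: (cboundP CX); exact: leq_trans (leq_bigmax (Ordinal hl)) hi.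
rewrite (@orbit_sumE _ _ _ B); last first.
  by move=> i hi; rewrite (mxmulEcol _ RX HL) big1 // => l _; rewrite HB ?mul0r.
rewrite (vecmulE _ HL); under eq_bigr => t _ do rewrite (mxmulEcol _ RX HL).
rewrite exchange_big; apply: eq_bigr => l _.
by rewrite (@orbit_sumE _ _ _ B) ?mulr_suml // => i; apply: HB.
Qed.

Variable T : mx k.
Hypothesis T_shift : forall r c, T r c = if c == s r then 1 else 0.

Lemma row_finite_IT : row_finite (mxsub (mxid k) T).
Proof.
move=> i; exists (s i).+1 => j hj.
by rewrite /mxsub /mxid T_shift (gtn_eqF hj) ltn_eqF ?subr0 // (ltn_trans (s_gt i) hj).
Qed.

Lemma mulIT Z r c : mxmul (mxsub (mxid k) T) Z r c = Z r c - Z (s r) c.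
Proof.
rewrite (@mxmulErow _ _ _ r c (s r).+1 row_finite_IT); last first.
  move=> l hl.
  by rewrite /mxsub /mxid T_shift (gtn_eqF hl) ltn_eqF ?subr0 // (ltn_trans (s_gt r) hl).
under eq_bigr => l _ do
  rewrite /mxsub /mxid T_shift mulrBl eq_sym !(fun_if (fun x => x * _)) !mul1r !mul0r.
by rewrite sumrB !(sum_ord_delta (fun l => Z l c)) // ltnS ltnW.
Qed.

(* The orbit sum of [(I - T) Z] telescopes to the row [Z r]; conversely
   [orbit_sum X] is a preimage of [X] under [I - T]. *)
Lemma in_idealP X :
  in_ideal T X <-> col_finite X /\ forall r, finsupp (orbit_sum X r).
Proof.
split.
  case=> Z [[RZ CZ] EX]; have CX : col_finite X.
    move=> c; case: (CZ c) => b Hb; exists b => i hi.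
    by rewrite EX mulIT !Hb ?subr0 // (leq_trans hi (ltnW (s_gt i))).
  split=> // r; case: (RZ r) => b Hb; exists b => c hc.
  set B := maxn (cbound X c) (cbound Z c).
  rewrite (@orbit_sumE _ _ _ B) => [|i]; last by rewrite geq_max => /andP[/(cboundP CX)].
  under eq_bigr => t _ do rewrite EX mulIT -iterS.
  rewrite (sum_ord_telescope (fun t => Z (iter t s r) c)) Hb // (cboundP CZ) ?subr0 //.
  exact: leq_trans (leq_maxr _ _) (leq_trans (leq_addr r B) (iter_s_ge B r)).
case=> CX FX; exists (orbit_sum X); split; first split=> // c.
  case: (CX c) => b Hb; exists b => r hr; rewrite (orbit_sumE _ Hb) big1 // => t _.
  by apply: Hb; rewrite (leq_trans hr) // (leq_trans (leq_addl t r)) ?iter_s_ge.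
move=> r c; rewrite mulIT orbit_sum_step ?addrK //.
Qed.

End OrbitSum.

Section RowExt.
Variables (k : fieldType) (n m : nat) (P : 'I_n -> 'I_m -> mx k).
Hypothesis P_rcfm : forall i j, rcfm (P i j).

(* Equations are indexed by [(j, c)]: "column [c] of [\sum_i v_i P_ij] equals
   [nu_j c]"; a combination of them is a [seq (k * ('I_m * nat))]. *)
Implicit Type L : seq (k * ('I_m * nat)).

Lemma sum_regroup L B (w : 'I_m -> nat -> k) (g : k * ('I_m * nat) -> k) :
  (forall p, p \in L -> (p.2.2 < B)%N) ->
  \sum_(j < m) \sum_(x < B) w j x * (\sum_(p <- L | p.2 == (j, nat_of_ord x)) g p)
  = \sum_(p <- L) g p * w p.2.1 p.2.2.
Proof.
move=> HB; rewrite (eq_big_seq (fun p => \sum_(j < m) \sum_(x < B)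
    (if p.2 == (j, nat_of_ord x) then w j x * g p else 0))); last first.
  move=> [c [j0 x0]] /HB /= hx; rewrite (bigD1 j0) //= [X in _ + X]big1 ?addr0 => [|j nj].
    under eq_bigr => x _ do rewrite xpair_eqE eqxx eq_sym.
    by rewrite (sum_ord_delta (fun x => w j0 x * g _)) // mulrC.
  by rewrite big1 // => x _; rewrite xpair_eqE eq_sym (negbTE nj).
rewrite [RHS]exchange_big; apply: eq_bigr => j _; rewrite [RHS]exchange_big.
apply: eq_bigr => x _; rewrite mulr_sumr big_mkcond; apply: eq_bigr => p _.
by case: eqP; rewrite ?mulr0.
Qed.

(* Assembles combinations [LL t] into one matrix per [j], whose column [t]
   carries the coefficients of [LL t] on the equations [(j, x)] with [t <= x]. *)
Definition relation_mx (LL : nat -> seq (k * ('I_m * nat))) (j : 'I_m) : mx k :=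
  fun x t => \sum_(p <- LL t | p.2 == (j, x)) (if (t <= p.2.2)%N then p.1 else 0).

Definition comb_bound L := (\max_(p <- L) p.2.2).+1.

Lemma comb_boundP L p : p \in L -> (p.2.2 < comb_bound L)%N.
Proof. by move=> pL; rewrite ltnS; apply: leq_bigmax_seq. Qed.

Lemma relation_mx_col LL j t x : (comb_bound (LL t) <= x)%N -> relation_mx LL j x t = 0.
Proof.
move=> hx; rewrite /relation_mx big1_seq // => p /andP[/eqP e /comb_boundP].
by rewrite e ltnNge hx.
Qed.

Lemma relation_mx_rcfm LL j : rcfm (relation_mx LL j).
Proof.
split=> [x|t]; last by exists (comb_bound (LL t)) => x; apply: relation_mx_col.
by exists x.+1 => t ht; rewrite /relation_mx big1 // => p /eqP-> /=; rewrite leqNgt ht.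
Qed.

Lemma relation_mx_pairing LL t (w : 'I_m -> nat -> k) :
  \sum_(j < m) vecmul (w j) (relation_mx LL j) t =
  \sum_(p <- LL t) (if (t <= p.2.2)%N then p.1 else 0) * w p.2.1 p.2.2.
Proof.
rewrite -(sum_regroup _ _ (@comb_boundP (LL t))); apply: eq_bigr => j _.
by rewrite (vecmulE _ (@relation_mx_col LL j t)).
Qed.

Variable nu : 'I_m -> nat -> k.
Hypothesis nu_cocycle : forall r : 'I_m -> mx k, (forall j, rcfm (r j)) ->
  (forall i, mxeq (mxsum (fun j => mxmul (P i j) (r j))) (fun _ _ => 0)) ->
  finsupp (fun c => \sum_(j < m) vecmul (nu j) (r j) c).

Definition tail_coef N (e : 'I_m * nat) i l := if (N <= e.2)%N then P i e.1 l e.2 else 0.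
Definition tail_rhs N (e : 'I_m * nat) := if (N <= e.2)%N then nu e.1 e.2 else 0.

Definition tail_inconsistent N L :=
  (forall i l, \sum_(p <- L) p.1 * tail_coef N p.2 i l = 0) /\
  \sum_(p <- L) p.1 * tail_rhs N p.2 != 0.

(* If every tail system were inconsistent, the witnessing relations would
   assemble into a syzygy of [P] pairing with [nu] to an infinitely supported
   row, contradicting the cocycle condition. *)
Lemma tail_system_consistent : exists N, forall L,
  (forall i l, \sum_(p <- L) p.1 * tail_coef N p.2 i l = 0) ->
  \sum_(p <- L) p.1 * tail_rhs N p.2 = 0.
Proof.
apply: NNPP => no_N.
have [LL LL_bad] : exists LL, forall N, tail_inconsistent N (LL N).
  apply: (@choice _ _ tail_inconsistent) => N; apply: NNPP => HN; apply: no_N.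
  exists N => L HL; apply: NNPP => /eqP Hne; exact: HN (ex_intro _ L (conj HL Hne)).
have weight N p (F : k) :
    p.1 * (if (N <= p.2.2)%N then F else 0) = (if (N <= p.2.2)%N then p.1 else 0) * F.
  by case: ifP; rewrite ?mulr0 ?mul0r.
have syzygy i : mxeq (mxsum (fun j => mxmul (P i j) (relation_mx LL j))) (fun _ _ => 0).
  move=> l t; rewrite /mxsum.
  rewrite (eq_bigr (fun j => vecmul (P i j l) (relation_mx LL j) t)) => [|j _]; last first.
    by rewrite mxmul_vecmul //; [case: (P_rcfm i j) | case: (relation_mx_rcfm LL j)].
  rewrite (relation_mx_pairing _ _ (fun j x => P i j l x)) -[RHS]((LL_bad t).1 i l).
  by apply: eq_bigr => p _; rewrite /tail_coef weight.
have [b Hb] := nu_cocycle (relation_mx_rcfm LL) syzygy.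
have /eqP[] := (LL_bad b).2; rewrite -[RHS](Hb b (leqnn b)) relation_mx_pairing.
by apply: eq_bigr => p _; rewrite /tail_rhs weight.
Qed.

Definition var_code (i : 'I_n) l := (l * n + i)%N.

Lemma var_code_eq i i' l l' : (var_code i l == var_code i' l') = (i == i') && (l == l').
Proof.
apply/eqP/andP => [E|[/eqP-> /eqP->] //].
have n_gt0 : (0 < n)%N by apply: leq_ltn_trans (ltn_ord i).
have Ei : i = i' :> nat by have := congr1 (modn^~ n) E; rewrite /var_code !modnMDl !modn_small.
split; first exact/eqP/val_inj.
apply/eqP; have := congr1 (divn^~ n) E; rewrite /var_code !divnMDl // !divn_small ?addn0 //.
Qed.

Lemma var_code_lt i l B : (l < B)%N -> (var_code i l < B * n)%N.
Proof.
move=> lB; apply: (@leq_trans (l.+1 * n)); first by rewrite /var_code mulSn addnC ltn_add2r.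
by rewrite leq_mul2r lB orbT.
Qed.

Definition col_bound x := \max_(i < n) \max_(j < m) cbound (P i j) x.

Lemma col_boundP i j x l : (col_bound x <= l)%N -> P i j l x = 0.
Proof.
move=> h; apply: (cboundP (proj2 (P_rcfm i j))).
by rewrite (leq_trans _ h) // (leq_trans _ (leq_bigmax i)) // (leq_bigmax j).
Qed.

(* The tail system with its unknowns [v i l] flattened to [var_code i l]. *)
Definition flat_coef N (e : 'I_m * nat) u :=
  \sum_(i < n) \sum_(l < col_bound e.2) (if u == var_code i l then tail_coef N e i l else 0).

Lemma flat_coef_code N e i l : flat_coef N e (var_code i l) = tail_coef N e i l.
Proof.
rewrite /flat_coef (bigD1 i) //= [X in _ + X]big1 ?addr0 => [|i' ni]; last first.
  by rewrite big1 // => l' _; rewrite var_code_eq eq_sym (negbTE ni).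
under eq_bigr => l' _ do rewrite var_code_eq eqxx /= eq_sym.
case: (ltnP l (col_bound e.2)) => hl; first by rewrite (sum_ord_delta (tail_coef N e i)).
rewrite big1 => [|l' _]; last by rewrite ltn_eqF // (leq_trans (ltn_ord l') hl).
by rewrite /tail_coef; case: ifP => // _; rewrite col_boundP.
Qed.

Lemma flat_coef_supp N j c u : (col_bound c * n <= u)%N -> flat_coef N (j, c) u = 0.
Proof.
move=> hu; rewrite /flat_coef big1 // => i _; rewrite big1 // => l _.
by rewrite ifF //; apply: contraTF hu => /eqP->; rewrite -ltnNge var_code_lt.
Qed.

Lemma row_coboundary : exists v : 'I_n -> nat -> k,
  forall j, finsupp (fun c => nu j c - \sum_(i < n) vecmul (v i) (P i j) c).
Proof.
have [N HN] := tail_system_consistent.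
have consistent L : (forall u, comb_lhs (flat_coef N) L u = 0) -> comb_rhs (tail_rhs N) L = 0.
  move=> HL; apply: HN => i l; rewrite -[RHS](HL (var_code i l)).
  by apply: eq_bigr => p _; rewrite flat_coef_code.
have [vs Hvs] := consistent_system_solvable consistent.
exists (fun i l => vs (var_code i l)) => j; exists N => c hc.
have := Hvs (j, c) _ (@flat_coef_supp N j c); rewrite /tail_rhs /= hc => <-.
rewrite /flat_coef.
under eq_bigr => u _ do rewrite mulr_suml.
rewrite exchange_big -sumrB big1 // => i _.
rewrite (vecmulE _ (col_boundP i j (x:=c))).
under eq_bigr => u _ do rewrite mulr_suml.
rewrite exchange_big -sumrB big1 // => l _.
under eq_bigr => u _ do rewrite (fun_if (fun x => x * vs u)) mul0r.
rewrite (sum_ord_delta (fun u => tail_coef N (j, c) i l * vs u)) ?var_code_lt //.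
by rewrite /tail_coef /= hc mulrC subrr.
Qed.

End RowExt.

Lemma orbit_invariant_choice (A : Type) (s : nat -> nat) (S : nat -> A -> Prop) :
  inhabited A -> (forall r, exists v, S r v) -> (forall r v, S (s r) v <-> S r v) ->
  exists V : nat -> A, (forall r, S r (V r)) /\ forall r, V (s r) = V r.
Proof.
move=> inhA HS S_s; exists (fun r => epsilon inhA (S r)); split=> [r|r].
  exact: epsilon_spec.
have -> // : S (s r) = S r.
by apply: functional_extensionality => v; apply: propositional_extensionality.
Qed.

Section ShiftExt.
Variables (k : fieldType) (s : nat -> nat).
Hypothesis s_gt : forall r, (r < s r)%N.
Variable T : mx k.
Hypothesis T_shift : forall r c, T r c = if c == s r then 1 else 0.
Variables (n m : nat) (P : 'I_n -> 'I_m -> mx k).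
Hypothesis P_rcfm : forall i j, rcfm (P i j).

Definition orbit_lift (W : nat -> 'I_n -> nat -> k) i : mx k := fun r c =>
  (if (r <= c)%N then W r i c else 0) - (if (s r <= c)%N then W (s r) i c else 0).

Lemma orbit_lift_rcfm W i : (forall r, W (s r) = W r) -> rcfm (orbit_lift W i).
Proof.
move=> W_s; split=> [r|c].
  by exists (s r) => c hc; rewrite /orbit_lift hc W_s (leq_trans (ltnW (s_gt r)) hc) subrr.
exists c.+1 => r hr; rewrite /orbit_lift leqNgt hr.
by rewrite leqNgt (leq_trans hr (ltnW (s_gt r))) subrr.
Qed.

Lemma orbit_sum_lift W i r c :
  orbit_sum s (orbit_lift W i) r c = if (r <= c)%N then W r i c else 0.
Proof.
rewrite (@orbit_sumE _ _ s_gt _ _ _ c.+1) => [|r' hr]; last first.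
  by rewrite /orbit_lift leqNgt hr leqNgt (leq_trans hr (ltnW (s_gt r'))) subrr.
rewrite (sum_ord_telescope (fun t => if (iter t s r <= c)%N then W (iter t s r) i c else 0)).
rewrite /= [in X in _ - X]ifF ?subr0 //; apply/negbTE; rewrite -ltnNge.
exact: leq_trans (leq_addr r c.+1) (iter_s_ge s_gt c.+1 r).
Qed.

Section Component.
Variable nu : 'I_m -> mx k.
Hypothesis nu_rcfm : forall j, rcfm (nu j).
Hypothesis nu_cocycle : forall r : 'I_m -> mx k, (forall j, rcfm (r j)) ->
  (forall i, mxeq (mxsum (fun j => mxmul (P i j) (r j))) (fun _ _ => 0)) ->
  in_ideal T (mxsum (fun j => mxmul (nu j) (r j))).

Definition row_solution r (v : 'I_n -> nat -> k) := forall j,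
  finsupp (fun c => orbit_sum s (nu j) r c - \sum_(i < n) vecmul (v i) (P i j) c).

Lemma row_solution_exists r : exists v, row_solution r v.
Proof.
apply: (@row_coboundary _ _ _ _ P_rcfm (fun j => orbit_sum s (nu j) r)) => rr rr_rcfm rr_syz.
have [_ /(_ r) fin_orbit] := (in_idealP s_gt T_shift _).1 (nu_cocycle rr_rcfm rr_syz).
apply: finsupp_ext fin_orbit _ => c.
rewrite (orbit_sum_sum s_gt) => [|j]; last first.
  by apply: col_finite_mul; [case: (nu_rcfm j) | case: (rr_rcfm j)].
by apply: eq_bigr => j _; rewrite (orbit_sum_mul s_gt) //; case: (rr_rcfm j).
Qed.

(* The orbit sums at [r] and [s r] differ by the finitely supported row [nu j r]. *)
Lemma row_solution_s r v : row_solution (s r) v <-> row_solution r v.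
Proof.
have step j c : orbit_sum s (nu j) r c = nu j r c + orbit_sum s (nu j) (s r) c.
  by rewrite (orbit_sum_step s_gt) //; case: (nu_rcfm j).
have fin_nu j : finsupp (nu j r) by case: (nu_rcfm j) => /(_ r).
split=> sol j.
  by apply: finsupp_ext (finsupp_add (fin_nu j) (sol j)) _ => c; rewrite step addrA.
apply: finsupp_ext (finsupp_sub (sol j) (fin_nu j)) _ => c.
by rewrite step addrAC (addrC (nu j r c)) addrK.
Qed.

Lemma ext1_shift_component : exists y : 'I_n -> mx k, (forall i, rcfm (y i)) /\
  forall j, in_ideal T (mxsub (nu j) (mxsum (fun i => mxmul (y i) (P i j)))).
Proof.
have [V [V_sol V_s]] := orbit_invariant_choice (inhabits (fun _ _ => 0))
  row_solution_exists row_solution_s.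
exists (orbit_lift V); split=> [i|j]; first exact: orbit_lift_rcfm.
have yP_col i : col_finite (mxmul (orbit_lift V i) (P i j)).
  by apply: col_finite_mul; [case: (orbit_lift_rcfm i V_s) | case: (P_rcfm i j)].
have nu_col : col_finite (nu j) by case: (nu_rcfm j).
apply/(in_idealP s_gt T_shift); split; first exact: col_finite_sub nu_col (col_finite_sum yP_col).
move=> r; have trunc_diff : finsupp (fun c => \sum_(i < n)
    (vecmul (orbit_sum s (orbit_lift V i) r) (P i j) c - vecmul (V r i) (P i j) c)).
  apply: finsupp_sum => i; apply: (@finsupp_vecmulB _ _ _ _ r); first by case: (P_rcfm i j).
  by move=> l hl; rewrite orbit_sum_lift hl.
apply: finsupp_ext (finsupp_sub (V_sol r j) trunc_diff) _ => c.
rewrite (orbit_sumB s_gt _ _ nu_col (col_finite_sum yP_col)) (orbit_sum_sum s_gt _ _ yP_col).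
rewrite sumrB opprB addrA subrK; congr (_ - _).
apply: eq_bigr => i _; rewrite (orbit_sum_mul s_gt) //; last by case: (P_rcfm i j).
exact: orbit_lift_rcfm.
Qed.

End Component.

Lemma ext1_zero_shift d : ext1_zero P T d.
Proof.
move=> nu nu_rcfm nu_cocycle.
have [Y HY] := choice (fun t y => (forall i, rcfm (y i)) /\ forall j,
    in_ideal T (mxsub (nu j t) (mxsum (fun i => mxmul (y i) (P i j)))))
  (fun t => ext1_shift_component (fun j => nu_rcfm j t) (fun r Hr Hsyz => nu_cocycle r Hr Hsyz t)).
by exists (fun i t => Y t i); split=> [i t | j t]; [case: (HY t) | apply: (HY t).2].
Qed.

End ShiftExt.

Definition tri n := (n * n.+1 %/ 2)%N.

Lemma triS n : tri n.+1 = (tri n + n.+1)%N.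
Proof.
by rewrite /tri (_ : n.+1 * n.+2 = n.+1 * 2 + n * n.+1)%N ?divnMDl 1?addnC //; lia.
Qed.

Lemma tri_pred n : (0 < n)%N -> tri n = (tri n.-1 + n)%N.
Proof. by case: n => // n _; rewrite triS. Qed.

Lemma tri_predE n : (0 < n)%N -> (n.-1 * n %/ 2)%N = tri n.-1.
Proof. by move=> n_gt0; rewrite /tri prednK. Qed.

Lemma leq_tri : {homo tri : a b / (a <= b)%N}.
Proof.
move=> a b /subnKC <-; elim: (b - a)%N => [|d IH]; first by rewrite addn0.
by rewrite addnS triS (leq_trans IH) ?leq_addr.
Qed.

Lemma tri_gt r : (r < tri r.+1)%N.
Proof. by rewrite triS addnS ltnS leq_addl. Qed.

(* [block r] is the [n] with [tri n.-1 <= r < tri n]: the rows of the [n]-th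
   diagonal block of [B]. *)
Definition block r := ex_minn (ex_intro (fun n => r < tri n)%N r.+1 (tri_gt r)).

Lemma blockP r : (tri (block r).-1 <= r < tri (block r))%N.
Proof.
rewrite /block; case: ex_minnP => b lt_rb min_b; rewrite lt_rb andbT leqNgt.
by apply/negP => /min_b; case: b lt_rb {min_b} => [|b _]; rewrite ?ltnn.
Qed.

Lemma block_uniq n r : (tri n.-1 <= r < tri n)%N -> block r = n.
Proof.
case/andP=> le_r lt_r; have /andP[le_br lt_br] := blockP r.
apply/eqP; rewrite eqn_leq; apply/andP; split.
  by rewrite /block; case: ex_minnP => b _ min_b; apply: min_b.
rewrite leqNgt; apply/negP => lt_bn; have le_bn : (block r <= n.-1)%N by lia.
by have := leq_trans lt_br (leq_trans (leq_tri le_bn) le_r); rewrite ltnn.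
Qed.

Definition succB r := (r + block r)%N.

Lemma block_gt0 r : (0 < block r)%N.
Proof. by have /andP[_] := blockP r; case: (block r). Qed.

Lemma succB_gt r : (r < succB r)%N.
Proof. by rewrite -addn1 leq_add2l block_gt0. Qed.

Lemma trmxB_shift (k : fieldType) r c :
  mxtr (matB k) r c = if c == succB r then 1 else 0.
Proof.
rewrite /mxtr /matB; congr (if _ then _ else _); apply/hasP/eqP.
  case=> b; rewrite mem_iota => /andP[b_gt0 _] /hasP[i].
  rewrite mem_iota add0n tri_predE // => /andP[_ lt_ib] /andP[/eqP-> /eqP r_eq].
  have tri_b := tri_pred b_gt0; have blk : block r = b by apply: block_uniq; lia.
  by rewrite /succB blk -/(tri b); lia.
move=> c_eq; have /andP[le_r lt_r] := blockP r; have b_gt0 := block_gt0 r.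
have tri_b := tri_pred b_gt0.
exists (block r); first by rewrite mem_iota b_gt0 add1n ltnS c_eq leq_addl.
apply/hasP; exists (r - tri (block r).-1)%N; first by rewrite mem_iota add0n; lia.
rewrite tri_predE // -/(tri (block r)) c_eq /succB.
by apply/andP; split; apply/eqP; lia.
Qed.

Theorem corollary7p17 (k : fieldType) (n m : nat)
    (P : 'I_n -> 'I_m -> mx k) (HP : forall i j, rcfm (P i j)) :
  (forall d : nat, ext1_zero P (mxtr (matA k)) d) /\
  ext1_zero P (mxtr (matB k)) 1.
Proof.
split=> [d|].
  by apply: (@ext1_zero_shift k succn) => // r c; rewrite /mxtr /matA.
exact: (ext1_zero_shift succB_gt (@trmxB_shift k)).
Qed.
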